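(* Let $V$ be a real vector space of dimension $n$ and $k\ge2$ with $k\le n-1$. For standard isotropic subspaces $L\subseteq V\oplus\wedge^kV^*$ one has the implications $$\text{(C2s)}\Rightarrow\text{(C1)}\Leftrightarrow\text{(C3s)}\Rightarrow\text{(C2w) and (C3w)},$$ and these are distinct notions: there exist standard isotropic subspaces (for suitable $V$ and $k\ge2$) satisfying (C3w) but not (C2w); satisfying (C2w) but not (C3w); satisfying both (C2w) and (C3w) but not (C1); and satisfying (C3s) but not (C2s).
   Context: On $V\oplus\wedge^kV^*$ the pairing is $\langle X+\alpha,Y+\beta\rangle=i_X\beta+i_Y\alpha\in\wedge^{k-1}V^*$, with orthogonal $L^\perp$. $\mathrm{pr}_1,\mathrm{pr}_2$ are the projections onto $V$, $\wedge^kV^*$; $E=\mathrm{pr}_1(L)$, $A_L=L\cap\wedge^kV^*$. For $S\subseteq\wedge^kV^*$, $S^\circ=\{X\in V\mid i_X\eta=0\ \forall\eta\in S\}$; for $W\subseteq V$, $\mathrm{Ann}(W)=\{\alpha\in\wedge^kV^*\mid i_Y\alpha=0\ \forall Y\in W\}$. An isotropic ($L\subseteq L^\perp$) subspace is standard if $\mathrm{Ann}(E)^\circ=E$ (equivalently $\dim E=n$ or $\dim E\le n-k$). Conditions: (C1) $L=L^\perp$; (C2w) $L\subseteq L^\perp$ and $L\cap V=\mathrm{pr}_2(L)^\circ$; (C2s) $L\subseteq L^\perp$ and $\mathrm{Ann}(L\cap V)=\mathrm{pr}_2(L)$; (C3w) $L\subseteq L^\perp$ and $E=A_L^\circ$;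 (C3s) $L\subseteq L^\perp$ and $\mathrm{Ann}(E)=A_L$. *)

From mathcomp Require Import all_boot all_order all_algebra.
From mathcomp Require Import reals.
Set Implicit Arguments. Unset Strict Implicit. Unset Printing Implicit Defensive.
Import GRing.Theory Num.Theory.
Local Open Scope ring_scope.

(* A (candidate) k-form on V is a function of a sequence of vectors
   (nat -> V) -> R; it is an element of wedge^k V^* when it depends only on
   the first k arguments, is linear in each of them and is alternating. *)
Definition kform (R : realType) (n : nat) := (nat -> 'rV[R]_n) -> R.

Definition setarg (R : realType) (n : nat) (f : nat -> 'rV[R]_n) (j : nat)
  (v : 'rV[R]_n) : nat -> 'rV[R]_n := fun m => if m == j then v else f m.

Definition is_form (R : realType) (n k : nat) (a : kform R n) : Prop :=
  [/\ (forall f g : nat -> 'rV[R]_n, (forall j, (j < k)%N -> f j = g j) -> a f = a g),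
      (forall f j (c : R) v w, (j < k)%N ->
          a (setarg f j (c *: v + w)) = c * a (setarg f j v) + a (setarg f j w))
    & (forall f i j, (i < j)%N -> (j < k)%N -> f i = f j -> a f = 0)].

Definition ins (R : realType) (n : nat) (X : 'rV[R]_n) (a : kform R n) : kform R n :=
  fun f => a (fun j => if j is j'.+1 then f j' else X).

Definition elt (R : realType) (n : nat) := ('rV[R]_n * kform R n)%type.
Definition eset (R : realType) (n : nat) := elt R n -> Prop.

Definition zero_form (R : realType) (n : nat) : kform R n := fun _ => 0.

Definition pairing_zero (R : realType) (n : nat) (p q : elt R n) : Prop :=
  forall f, ins p.1 q.2 f + ins q.1 p.2 f = 0.

Definition is_subspace (R : realType) (n k : nat) (L : eset R n) : Prop :=
  [/\ (forall p, L p -> is_form k p.2),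
      L (0, @zero_form R n),
      (forall p q, L p -> L q -> L (p.1 + q.1, fun f => p.2 f + q.2 f))
    & (forall (c : R) p, L p -> L (c *: p.1, fun f => c * p.2 f))].

Definition perp (R : realType) (n k : nat) (L : eset R n) : eset R n :=
  fun q => is_form k q.2 /\ forall p, L p -> pairing_zero p q.

Definition isotropic (R : realType) (n k : nat) (L : eset R n) : Prop :=
  forall p, L p -> perp k L p.

Definition seteq (T : Type) (A B : T -> Prop) : Prop := forall x, A x <-> B x.

Definition pr1L (R : realType) (n : nat) (L : eset R n) : 'rV[R]_n -> Prop :=
  fun X => exists a, L (X, a).
Definition pr2L (R : realType) (n : nat) (L : eset R n) : kform R n -> Prop :=
  fun a => exists X, L (X, a).
Definition AL (R : realType) (n : nat) (L : eset R n) : kform R n -> Prop :=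
  fun a => L (0, a).
Definition LcapV (R : realType) (n : nat) (L : eset R n) : 'rV[R]_n -> Prop :=
  fun X => L (X, @zero_form R n).

Definition circ (R : realType) (n : nat) (S : kform R n -> Prop) : 'rV[R]_n -> Prop :=
  fun X => forall eta, S eta -> forall f, ins X eta f = 0.
Definition Ann (R : realType) (n k : nat) (W : 'rV[R]_n -> Prop) : kform R n -> Prop :=
  fun a => is_form k a /\ forall Y, W Y -> forall f, ins Y a f = 0.

Definition standard (R : realType) (n k : nat) (L : eset R n) : Prop :=
  seteq (circ (Ann k (pr1L L))) (pr1L L).

Definition C1 (R : realType) (n k : nat) (L : eset R n) : Prop :=
  seteq L (perp k L).
Definition C2w (R : realType) (n k : nat) (L : eset R n) : Prop :=
  isotropic k L /\ seteq (LcapV L) (circ (pr2L L)).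
Definition C2s (R : realType) (n k : nat) (L : eset R n) : Prop :=
  isotropic k L /\ seteq (Ann k (LcapV L)) (pr2L L).
Definition C3w (R : realType) (n k : nat) (L : eset R n) : Prop :=
  isotropic k L /\ seteq (pr1L L) (circ (AL L)).
Definition C3s (R : realType) (n k : nat) (L : eset R n) : Prop :=
  isotropic k L /\ seteq (Ann k (pr1L L)) (AL L).

Definition std_iso (R : realType) (n k : nat) (L : eset R n) : Prop :=
  [/\ is_subspace k L, isotropic k L & standard k L].

From mathcomp Require Import all_boot all_order all_algebra.
From mathcomp Require Import reals.
From mathcomp Require Import ring lra zify.
From Stdlib Require Import FunctionalExtensionality Classical.
Set Implicit Arguments. Unset Strict Implicit. Unset Printing Implicit Defensive.
Import GRing.Theory Num.Theory.
Local Open Scope ring_scope.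

(* An element Y + b of L^perp pairs to zero with A_L and with L cap V, so Y lies in A_L^o and
   b in Ann(L cap V); moreover L^perp is a subspace.  Under (C3s) and standardness,
   A_L^o = Ann(E)^o = E, so Y + a lies in L for some a, and then b - a lies in Ann(E) = A_L.
   Under (C2s), Z + b lies in L for some Z, and Y - Z lies in pr2(L)^o = Ann(L cap V)^o, which is
   L cap V again: if Ann(L cap V) contains a nonzero form, pulling it back along a projection
   that fixes L cap V detects any W outside L cap V; otherwise Ann(E) = 0, so standardness gives
   E = V and every W + a in L has a in pr2(L) = Ann(L cap V) = 0.  The four separating examples
   are explicit subspaces of V + wedge^2 V^* with dim V = 3, 4, 5. *)

Section Forms.
Variables (R : realType) (n k : nat).
Implicit Types (a b : kform R n) (f g : nat -> 'rV[R]_n) (X Y W : 'rV[R]_n).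

Lemma form_congr a f g : is_form k a -> (forall j, (j < k)%N -> f j = g j) -> a f = a g.
Proof. by case=> Ha _ _; apply: Ha. Qed.

Lemma is_form_eq a b : is_form k a -> a =1 b -> is_form k b.
Proof.
case=> A1 A2 A3 ab; split=> [f g fg|f j c v w jk|f i j ij jk fij]; rewrite -?ab.
- exact: A1.
- exact: A2.
- exact: A3 fij.
Qed.

Lemma is_form0 : is_form k (@zero_form R n).
Proof. by split=> *; rewrite /zero_form ?mulr0 ?addr0. Qed.

Lemma is_formD a b : is_form k a -> is_form k b -> is_form k (fun f => a f + b f).
Proof.
case=> A1 A2 A3 [B1 B2 B3]; split=> [f g fg|f j c v w jk|f i j ij jk fij].
- by rewrite (A1 f g fg) (B1 f g fg).
- by rewrite A2 // B2 // mulrDr addrACA.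
- by rewrite (A3 f i j) // (B3 f i j) // addr0.
Qed.

Lemma is_formZ c a : is_form k a -> is_form k (fun f => c * a f).
Proof.
case=> A1 A2 A3; split=> [f g fg|f j d v w jk|f i j ij jk fij].
- by rewrite (A1 f g fg).
- by rewrite A2 // mulrDr mulrCA.
- by rewrite (A3 f i j) // mulr0.
Qed.

Lemma is_formB a b : is_form k a -> is_form k b -> is_form k (fun f => a f - b f).
Proof.
move=> Ha Hb; apply: is_form_eq (is_formD Ha (is_formZ (-1) Hb)) _ => f.
by rewrite mulN1r.
Qed.

Lemma form_setargD a f j v w : is_form k a -> (j < k)%N ->
  a (setarg f j (v + w)) = a (setarg f j v) + a (setarg f j w).
Proof. by case=> _ A2 _ jk; rewrite -{1}(scale1r v) A2 // mul1r. Qed.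

Lemma form_setarg_id a f j : is_form k a -> a (setarg f j (f j)) = a f.
Proof. by move=> Ha; apply: (form_congr Ha) => m _; rewrite /setarg; case: eqP => // ->. Qed.

Hypothesis k_gt0 : (0 < k)%N.

Lemma ins_linear a f : is_form k a -> scalar (fun X => ins X a f).
Proof.
case=> A1 A2 _ c X Y; rewrite /ins.
pose h j := if j is j'.+1 then f j' else 0.
have E Z : a (fun j => if j is j'.+1 then f j' else Z) = a (setarg h 0 Z).
  by apply: A1 => -[|j].
by rewrite !E A2.
Qed.

Lemma ins0 a f : is_form k a -> ins 0 a f = 0.
Proof. by move=> Ha; have := ins_linear f Ha 1 0 0; rewrite scale1r addr0 mul1r; lra. Qed.

Lemma insB a X Y f : is_form k a -> ins (X - Y) a f = ins X a f - ins Y a f.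
Proof. by move=> Ha; rewrite addrC -scaleN1r ins_linear // mulN1r addrC. Qed.

Lemma setargC f i j x y : i != j ->
  setarg (setarg f i x) j y =1 setarg (setarg f j y) i x.
Proof.
move=> ij m; rewrite /setarg; case: (eqVneq m j) => [->|//].
by rewrite eq_sym (negbTE ij).
Qed.

Lemma form_antisym a f i j x y : is_form k a -> (i < j < k)%N ->
  a (setarg (setarg f i x) j y) = - a (setarg (setarg f i y) j x).
Proof.
move=> Ha /andP[ij jk]; have ik := ltn_trans ij jk.
pose s u v := a (setarg (setarg f i u) j v).
have swap u v : s u v = a (setarg (setarg f j v) i u).
  by apply: (form_congr Ha) => m _; apply: setargC; rewrite ltn_eqF.
have sDl u u' v : s (u + u') v = s u v + s u' v by rewrite !swap form_setargD.
have sDr u v v' : s u (v + v') = s u v + s u v' by rewrite /s form_setargD.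
have suu u : s u u = 0.
  by case: Ha => _ _ A3; apply: (A3 _ i j) => //; rewrite /setarg eqxx ltn_eqF ?eqxx.
have := suu (x + y); rewrite sDl !sDr !suu add0r addr0 => /eqP.
by rewrite addr_eq0 => /eqP.
Qed.

Lemma form_setarg_eq0 a W f j : is_form k a -> (forall g, ins W a g = 0) ->
  (j < k)%N -> a (setarg f j W) = 0.
Proof.
move=> Ha aW jk.
have slot0 g : a (setarg g 0 W) = 0.
  by rewrite -(aW (fun m => g m.+1)); apply: (form_congr Ha) => -[].
case: j jk => [_|j jk]; first exact: slot0.
have -> : a (setarg f j.+1 W) = a (setarg (setarg f 0 (f 0%N)) j.+1 W).
  by apply: (form_congr Ha) => m _; rewrite /setarg; case: (m == j.+1) => //; case: eqP => // ->.
rewrite form_antisym // -[RHS]oppr0 -(slot0 (setarg f j.+1 (f 0%N))); congr (- _).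
by apply: (form_congr Ha) => m _; apply: setargC.
Qed.

Lemma form_setarg_shift a W f j c : is_form k a -> (forall g, ins W a g = 0) ->
  (j < k)%N -> a (setarg f j (c *: W + f j)) = a f.
Proof.
move=> Ha aW jk; case: (Ha) => _ A2 _.
by rewrite A2 // form_setarg_eq0 // mulr0 add0r form_setarg_id.
Qed.

Lemma is_form_comp a (P : 'rV[R]_n -> 'rV[R]_n) : is_form k a -> linear P ->
  is_form k (fun g => a (P \o g)).
Proof.
case=> A1 A2 A3 linP; split=> [f g fg|f j c v w jk|f i j ij jk fij] /=.
- by apply: A1 => j jk; rewrite /= fg.
- have E x : a (P \o setarg f j x) = a (setarg (P \o f) j (P x)).
    by apply: A1 => m _; rewrite /setarg /=; case: (m == j).
  by rewrite !E linP A2.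
- by apply: (A3 _ i j) => //=; rewrite fij.
Qed.

Lemma form_kernel_args a (phi : 'rV[R]_n -> R) W f0 : is_form k a ->
  (forall g, ins W a g = 0) -> scalar phi -> phi W = 1 -> a f0 <> 0 ->
  exists f, a f <> 0 /\ forall j, (0 < j < k)%N -> phi (f j) = 0.
Proof.
move=> Ha aW linphi phiW af0.
suff /(_ k.-1 (leqnn _)) [f [af fk]] : forall m, (m <= k.-1)%N ->
    exists f, a f = a f0 /\ forall j, (0 < j <= m)%N -> phi (f j) = 0.
  by exists f; split=> [|j /andP[j0 jk]]; rewrite ?af //; apply: fk; rewrite j0 -ltnS prednK.
elim=> [|m IH] mk.
  by exists f0; split=> // j; rewrite leqn0 andbC => /andP[/eqP->].
have [f [af fm]] := IH (ltnW mk).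
have m1k : (m.+1 < k)%N by rewrite -(prednK k_gt0) ltnS.
exists (setarg f m.+1 (- phi (f m.+1) *: W + f m.+1)); split.
  by rewrite form_setarg_shift.
move=> j /andP[j0]; rewrite leq_eqVlt ltnS /setarg => /orP[/eqP->|jm].
  by rewrite eqxx linphi phiW mulr1 addNr.
by rewrite ltn_eqF // fm // j0.
Qed.

End Forms.

Definition vsubspace (F : fieldType) (n : nat) (K : 'rV[F]_n -> Prop) : Prop :=
  [/\ K 0, forall x y, K x -> K y -> K (x + y) & forall c x, K x -> K (c *: x)].

Section Separation.
Variables (F : fieldType) (n : nat) (K : 'rV[F]_n -> Prop).
Hypothesis subK : vsubspace K.

Lemma vsubspace_mulmx m (A : 'M[F]_(m, n)) :
  (forall i, K (row i A)) -> forall x, K (x *m A).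
Proof.
case: subK => K0 KD KZ KA x; rewrite mulmx_sum_row.
by apply: (big_ind K) => // i _; apply: KZ.
Qed.

Lemma vsubspace_col_mx m (A : 'M[F]_(m, n)) s :
  (forall i, K (row i A)) -> K s -> forall i, K (row i (col_mx A s)).
Proof.
move=> KA Ks i; rewrite -(splitK i).
by case: (split i) => j /=; rewrite ?rowKu ?rowKd ?row_id.
Qed.

Lemma vsubspace_spanned :
  exists m (A : 'M[F]_(m, n)), (forall i, K (row i A)) /\ forall s, K s -> (s <= A)%MS.
Proof.
(* otherwise vectors of K could be stacked into matrices of rank > n *)
apply: NNPP => nospan.
suff /(_ n.+1) [m [A [_]]] : forall r, exists m (A : 'M[F]_(m, n)),
    (forall i, K (row i A)) /\ (r <= \rank A)%N by rewrite ltnNge rank_leq_col.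
elim=> [|r [m [A [KA rA]]]]; first by exists 0%N, 0; split=> // -[].
have [s [Ks sA]] : exists s, K s /\ ~~ (s <= A)%MS.
  apply: NNPP => allA; apply: nospan; exists m, A; split=> // s Ks.
  by apply: NNPP => /negP sA; apply: allA; exists s.
exists (m + 1)%N, (col_mx A s); split; first exact: vsubspace_col_mx.
apply: leq_ltn_trans rA _; apply: rank_ltmx.
by rewrite ltmxE col_mx_sub (negbTE sA) andbF andbT -addsmxE addsmxSl.
Qed.

Lemma vsubspace_separate W : ~ K W ->
  exists phi : 'rV[F]_n -> F, [/\ scalar phi, forall x, K x -> phi x = 0 & phi W = 1].
Proof.
move=> KW; have [m [A [KA AK]]] := vsubspace_spanned.
have : W *m cokermx A != 0.
  by rewrite -submxE; apply/negP => /submxP[D WD]; apply: KW; rewrite WD; exact: vsubspace_mulmx.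
case/eqP/matrixP/not_all_ex_not => i /not_all_ex_not [j]; rewrite [X in _ <> X]mxE => /eqP Wj.
exists (fun x => (x *m cokermx A) i j / (W *m cokermx A) i j); split.
- by move=> c x y; rewrite mulmxDl -scalemxAl !mxE mulrDl mulrA.
- by move=> x /AK; rewrite submxE => /eqP ->; rewrite mxE mul0r.
- by rewrite divff.
Qed.

End Separation.

Lemma circ_seteq (R : realType) (n : nat) (S S' : kform R n -> Prop) :
  seteq S S' -> seteq (circ S) (circ S').
Proof. by move=> SS' X; split=> XS eta /SS'; apply: XS. Qed.

Section Annihilator.
Variables (R : realType) (n k : nat) (K : 'rV[R]_n -> Prop).
Hypotheses (subK : vsubspace K) (k_gt0 : (0 < k)%N).

(* If W is not in K, a nonzero a in Ann(K) pulled back along the projection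
   P = id + phi (f 0 - W), which fixes K and sends W to f 0, stays in Ann(K)
   but no longer vanishes on W. *)
Lemma circ_Ann_sub a f0 W : Ann k K a -> a f0 <> 0 -> circ (Ann k K) W -> K W.
Proof.
move=> [Ha aK] af0 WAnn; apply: NNPP => KW.
have [phi [linphi phiK phiW]] := vsubspace_separate subK KW.
have [f [af phif]] := form_kernel_args k_gt0 Ha (WAnn a (conj Ha aK)) linphi phiW af0.
pose P x := x + phi x *: (f 0%N - W).
have linP : linear P.
  move=> c x y; rewrite /P; move: (f 0%N - W) => d.
  by rewrite linphi scalerDl scalerDr scalerA addrACA.
have PAnn : Ann k K (fun g => a (P \o g)).
  split=> [|Y KY g]; first exact: is_form_comp.
  rewrite /ins -(aK Y KY (P \o g)); apply: (form_congr Ha) => -[|j] _ //=.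
  by rewrite /P phiK // scale0r addr0.
apply: af; rewrite -(WAnn _ PAnn (fun j => f j.+1)); apply: (form_congr Ha) => -[|j] jk /=.
  by rewrite /P phiW scale1r addrC subrK.
by rewrite /P phif // scale0r addr0.
Qed.

End Annihilator.

Section Pairing.
Variables (R : realType) (n k : nat) (L : eset R n).
Hypotheses (subL : is_subspace k L) (k_gt0 : (0 < k)%N).

Lemma subspace_form p : L p -> is_form k p.2.
Proof. by case: subL => Lform _ _ _; apply: Lform. Qed.

Lemma subspace_addE p q X a : L p -> L q -> p.1 + q.1 = X ->
  (forall f, p.2 f + q.2 f = a f) -> L (X, a).
Proof.
case: subL => _ _ LD _ Lp Lq <- pqa.
by rewrite -(functional_extensionality _ _ pqa); apply: LD.
Qed.

Lemma LcapV_vsubspace : vsubspace (LcapV L).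
Proof.
case: subL => _ L0 _ LZ; split=> // [x y Lx Ly|c x Lx].
  by apply: subspace_addE Lx Ly _ _ => // f; rewrite addr0.
rewrite /LcapV; suff <- : (fun f => c * @zero_form R n f) = @zero_form R n by exact: LZ Lx.
by apply: functional_extensionality => f; rewrite /zero_form mulr0.
Qed.

Lemma perp_sub p q : perp k L p -> perp k L q -> perp k L (p.1 - q.1, fun f => p.2 f - q.2 f).
Proof.
move=> [pF pL] [qF qL]; split=> [|r Lr f]; first exact: is_formB.
have := pL r Lr f; have := qL r Lr f.
rewrite /pairing_zero /= (insB k_gt0) /ins; [lra | exact: subspace_form].
Qed.

Lemma perp_formE b : perp k L (0, b) <-> Ann k (pr1L L) b.
Proof.
split=> [[bF bL]|[bF bE]]; split=> //.
  move=> Y [a LYa] f; have := bL _ LYa f.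
  by rewrite /pairing_zero /= (ins0 k_gt0) ?addr0 //; exact: subspace_form LYa.
move=> [Y a] LYa f; rewrite /pairing_zero /= (ins0 k_gt0) ?(bE Y) ?addr0 //.
  by exists a.
exact: subspace_form LYa.
Qed.

Lemma perp_vectorE X : perp k L (X, @zero_form R n) <-> circ (pr2L L) X.
Proof.
split=> [[_ XL] eta [Y LYeta] f|XL]; first by have := XL _ LYeta f; rewrite /pairing_zero add0r.
split=> [|[Y eta] LYeta f]; first exact: is_form0.
by rewrite /pairing_zero add0r; apply: XL; exists Y.
Qed.

Lemma perp_circ_AL p : perp k L p -> circ (AL L) p.1.
Proof.
move=> [pF pL] eta L0eta f.
by have := pL _ L0eta f; rewrite /pairing_zero /= (ins0 k_gt0) ?add0r.
Qed.

Lemma perp_Ann_LcapV p : perp k L p -> Ann k (LcapV L) p.2.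
Proof.
move=> [pF pL]; split=> // X LX f.
by have := pL _ LX f; rewrite /pairing_zero /= addr0.
Qed.

End Pairing.

Section Implications.
Variables (R : realType) (n k : nat) (L : eset R n).
Hypotheses (subL : is_subspace k L) (k_gt0 : (0 < k)%N).

Lemma C1_C3s : C1 k L -> C3s k L.
Proof.
move=> L1; split=> [p /L1 //|a].
by split=> [/(perp_formE subL k_gt0)/L1 | /L1/(perp_formE subL k_gt0)].
Qed.

Lemma C1_C2w : C1 k L -> C2w k L.
Proof.
move=> L1; split=> [p /L1 //|X].
by split=> [/L1/(perp_vectorE k L) | /(perp_vectorE k L)/L1].
Qed.

Lemma C3s_C3w : standard k L -> C3s k L -> C3w k L.
Proof.
move=> Lstd [iso AnnE]; split=> // X.
by rewrite -(Lstd X); apply: circ_seteq => a; rewrite (AnnE a).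
Qed.

Lemma C3s_C1 : standard k L -> C3s k L -> C1 k L.
Proof.
move=> Lstd [iso AnnE] [Y b]; split=> [/iso //|Ybperp].
have [a LYa] : pr1L L Y.
  by apply/Lstd/(circ_seteq AnnE) => eta Leta f; exact: (perp_circ_AL k_gt0 Ybperp Leta f).
have := perp_sub subL k_gt0 Ybperp (iso _ LYa); rewrite /= subrr.
move=> /(perp_formE subL k_gt0)/AnnE bAL.
by apply: (subspace_addE subL LYa bAL) => [|f] /=; rewrite ?addr0 // addrC subrK.
Qed.

Lemma circ_pr2L_LcapV : standard k L -> seteq (Ann k (LcapV L)) (pr2L L) ->
  forall W, circ (pr2L L) W -> LcapV L W.
Proof.
move=> Lstd AnnK W /(circ_seteq AnnK W).2 WAnn.
have [[a [f [Ka af]]]|Ann0] := classic (exists a f, Ann k (LcapV L) a /\ a f <> 0).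
  exact: (circ_Ann_sub (LcapV_vsubspace subL) k_gt0 Ka af WAnn).
have AnnK0 a f : Ann k (LcapV L) a -> a f = 0.
  by move=> Ka; apply: NNPP => af; apply: Ann0; exists a, f.
have [a LWa] : pr1L L W.
  apply/Lstd => eta [etaF etaE] f; apply: (AnnK0 eta); split=> // Y LY.
  by apply: etaE; exists (@zero_form R n).
rewrite /LcapV; suff <- : a = @zero_form R n by [].
apply: functional_extensionality => f; apply: AnnK0.
by apply/AnnK; exists W.
Qed.

Lemma C2s_C1 : standard k L -> C2s k L -> C1 k L.
Proof.
move=> Lstd [iso AnnK] [Y b]; split=> [/iso //|Ybperp].
have [Z LZb] := (AnnK b).1 (perp_Ann_LcapV Ybperp).
have LYZ : LcapV L (Y - Z).
  apply: circ_pr2L_LcapV => //; apply/(perp_vectorE k L).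
  have := perp_sub subL k_gt0 Ybperp (iso _ LZb).
  suff -> : (fun f => b f - b f) = @zero_form R n by [].
  by apply: functional_extensionality => f; rewrite subrr.
by apply: (subspace_addE subL LZb LYZ) => [|f] /=; rewrite ?addr0 // addrC subrK.
Qed.

End Implications.

Definition wedge (R : realType) (n : nat) (i j : 'I_n) : kform R n :=
  fun f => f 0%N 0 i * f 1%N 0 j - f 0%N 0 j * f 1%N 0 i.
Definition args2 (R : realType) (n : nat) (u v : 'rV[R]_n) : nat -> 'rV[R]_n :=
  fun m => if m is 0%N then u else v.
Arguments wedge {R n}.

Section Wedge.
Variables (R : realType) (n : nat).

Lemma is_form_wedge (i j : 'I_n) : is_form 2 (@wedge R n i j).
Proof.
rewrite /wedge; split.
- by move=> f g fg; rewrite !fg.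
- by move=> f [|[|//]] c v w _; rewrite /setarg /= !mxE; ring.
- move=> f p q pq q2 fpq; have [p0 q1] : p = 0%N /\ q = 1%N by lia.
  by rewrite p0 q1 in fpq; rewrite fpq; ring.
Qed.

Lemma Ann_wedge (E : 'rV[R]_n -> Prop) (i j : 'I_n) :
  (forall Y, E Y -> Y 0 i = 0 /\ Y 0 j = 0) -> Ann 2 E (wedge i j).
Proof.
move=> Eij; split=> [|Y /Eij[Yi Yj] f]; first exact: is_form_wedge.
by rewrite /ins /wedge /= Yi Yj; ring.
Qed.

Lemma ins_wedge_eq0 (i j : 'I_n) (X : 'rV[R]_n) : i != j ->
  (forall f, ins X (wedge i j) f = 0) -> X 0 i = 0 /\ X 0 j = 0.
Proof.
move=> ij Xij; have := Xij (fun _ => 'e_j); have := Xij (fun _ => 'e_i).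
rewrite /ins /wedge /= !mxE !eqxx (negbTE ij) eq_sym (negbTE ij) /=.
by move=> hi hj; split; lra.
Qed.

End Wedge.

Lemma standardI (R : realType) (n k : nat) (L : eset R n) :
  (forall X, circ (Ann k (pr1L L)) X -> pr1L L X) -> standard k L.
Proof. by move=> AnnE X; split=> [/AnnE|EX eta [_ etaE]]; last exact: etaE. Qed.

Section NotC1.
Variable R : realType.
Let i0 : 'I_3 := @Ordinal 3 0 isT.
Let i1 : 'I_3 := @Ordinal 3 1 isT.
Let i2 : 'I_3 := @Ordinal 3 2 isT.

Definition L_notC1 : eset R 3 := fun p =>
  p.1 = 0 /\ exists a b, forall f, p.2 f = a * wedge i0 i1 f + b * wedge i0 i2 f.

Lemma L_notC1_form p : L_notC1 p -> is_form 2 p.2.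
Proof.
case=> _ [a [b pab]]; apply: is_form_eq (fun f => esym (pab f)).
by apply: is_formD; apply: is_formZ; apply: is_form_wedge.
Qed.

Lemma L_notC1_0 a b eta : (forall f, eta f = a * wedge i0 i1 f + b * wedge i0 i2 f) ->
  L_notC1 (0, eta).
Proof. by split=> //; exists a, b. Qed.

Lemma L_notC1_zero : L_notC1 (0, @zero_form R 3).
Proof. by apply: (L_notC1_0 (a := 0) (b := 0)) => f; rewrite /zero_form; ring. Qed.

Lemma L_notC1_pr1 X : pr1L L_notC1 X <-> X = 0.
Proof. by split=> [[a []] //|->]; exists (@zero_form R 3); exact: L_notC1_zero. Qed.

Lemma ins_wedge_row3_eq0 (X : 'rV[R]_3) : (forall f, ins X (wedge i0 i1) f = 0) ->
  (forall f, ins X (wedge i0 i2) f = 0) -> X = 0.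
Proof.
move=> X01 X02; have [X0 X1] := ins_wedge_eq0 (isT : i0 != i1) X01.
have [_ X2] := ins_wedge_eq0 (isT : i0 != i2) X02.
apply/rowP=> -[[|[|[|//]]] i3]; rewrite mxE; [rewrite -X0 | rewrite -X1 | rewrite -X2];
  by congr (X 0 _); apply: val_inj.
Qed.

Lemma L_notC1_std_iso : std_iso 2 L_notC1.
Proof.
split.
- split; first exact: L_notC1_form.
  + exact: L_notC1_zero.
  + move=> p q [p1 [a [b pab]]] [q1 [a' [b' qab]]]; split; first by rewrite /= p1 q1 addr0.
    by exists (a + a'), (b + b') => f /=; rewrite pab qab; ring.
  + move=> c p [p1 [a [b pab]]]; split; first by rewrite /= p1 scaler0.
    by exists (c * a), (c * b) => f /=; rewrite pab; ring.
- move=> p Lp; split=> [|q Lq f]; first exact: L_notC1_form.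
  by rewrite /pairing_zero Lp.1 Lq.1 !(ins0 (isT : (0 < 2)%N)) ?addr0 //; exact: L_notC1_form.
- apply: standardI => X XAnn; apply/L_notC1_pr1; apply: ins_wedge_row3_eq0; apply: XAnn;
    by apply: Ann_wedge => Y /L_notC1_pr1 ->; rewrite !mxE.
Qed.

Lemma L_notC1_C2w_C3w : C2w 2 L_notC1 /\ C3w 2 L_notC1.
Proof.
have [_ iso _] := L_notC1_std_iso.
have circ0 X : circ (pr2L L_notC1) X -> X = 0.
  move=> Xcirc; apply: ins_wedge_row3_eq0; apply: Xcirc; exists 0.
    by apply: (L_notC1_0 (a := 1) (b := 0)) => f; ring.
  by apply: (L_notC1_0 (a := 0) (b := 1)) => f; ring.
split; split=> // X; split.
- case=> /= -> _ eta [Y LYeta] f; rewrite (ins0 (isT : (0 < 2)%N)) //.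
  exact: L_notC1_form LYeta.
- by move/circ0 => ->; exact: L_notC1_zero.
- move/L_notC1_pr1 => -> eta Leta f; rewrite (ins0 (isT : (0 < 2)%N)) //.
  exact: L_notC1_form Leta.
- by move=> XAL; apply/L_notC1_pr1/circ0 => eta [Y [Y0 etaL]]; apply: XAL; rewrite /AL -Y0.
Qed.

Lemma L_notC1_notC1 : ~ C1 2 L_notC1.
Proof.
move=> L1; have [_ [a [b ab]]] : L_notC1 (0, wedge i1 i2).
  apply/L1; split=> [|p Lp f]; first exact: is_form_wedge.
  rewrite /pairing_zero Lp.1 !(ins0 (isT : (0 < 2)%N)) ?addr0 //.
  - exact: L_notC1_form Lp.
  - exact: is_form_wedge.
by have := ab (args2 'e_i1 'e_i2); rewrite /wedge /args2 /= !mxE /=; lra.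
Qed.

End NotC1.

Section NotC2w.
Variable R : realType.
Let i0 : 'I_4 := @Ordinal 4 0 isT.
Let i1 : 'I_4 := @Ordinal 4 1 isT.
Let i2 : 'I_4 := @Ordinal 4 2 isT.
Let i3 : 'I_4 := @Ordinal 4 3 isT.

Definition L_notC2w : eset R 4 := fun p =>
  [/\ p.1 0 i1 = 0, p.1 0 i2 = 0, p.1 0 i3 = 0 &
   exists a b, forall f, p.2 f = p.1 0 i0 * wedge i2 i3 f + a * wedge i1 i2 f + b * wedge i1 i3 f].

Lemma L_notC2w_form p : L_notC2w p -> is_form 2 p.2.
Proof.
case=> _ _ _ [a [b pab]]; apply: is_form_eq (fun f => esym (pab f)).
by apply: is_formD; [apply: is_formD|]; apply: is_formZ; apply: is_form_wedge.
Qed.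

Lemma L_notC2w_0 a b eta : (forall f, eta f = a * wedge i1 i2 f + b * wedge i1 i3 f) ->
  L_notC2w (0, eta).
Proof. by move=> etaab; split; rewrite ?mxE //; exists a, b => f /=; rewrite etaab; ring. Qed.

Lemma L_notC2w_pr1 X : pr1L L_notC2w X <-> [/\ X 0 i1 = 0, X 0 i2 = 0 & X 0 i3 = 0].
Proof.
split=> [[a []] //|[X1 X2 X3]].
exists (fun f => X 0 i0 * wedge i2 i3 f + 0 * wedge i1 i2 f + 0 * wedge i1 i3 f).
by split=> //; exists 0, 0.
Qed.

Lemma ins_wedge_L_notC2w_pr1 X : (forall f, ins X (wedge i1 i2) f = 0) ->
  (forall f, ins X (wedge i1 i3) f = 0) -> pr1L L_notC2w X.
Proof.
move=> X12 X13; have [X1 X2] := ins_wedge_eq0 (isT : i1 != i2) X12.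
by have [_ X3] := ins_wedge_eq0 (isT : i1 != i3) X13; apply/L_notC2w_pr1.
Qed.

Lemma L_notC2w_std_iso : std_iso 2 L_notC2w.
Proof.
split.
- split; first exact: L_notC2w_form.
  + by apply: (L_notC2w_0 (a := 0) (b := 0)) => f; rewrite /zero_form; ring.
  + move=> p q [p1 p2 p3 [a [b pab]]] [q1 q2 q3 [a' [b' qab]]].
    split; rewrite /= ?mxE ?p1 ?p2 ?p3 ?q1 ?q2 ?q3 ?addr0 //.
    by exists (a + a'), (b + b') => f; rewrite pab qab ?mxE; ring.
  + move=> c p [p1 p2 p3 [a [b pab]]].
    split; rewrite /= ?mxE ?p1 ?p2 ?p3 ?mulr0 //.
    by exists (c * a), (c * b) => f; rewrite pab ?mxE; ring.
- move=> p Lp; split=> [|q Lq f]; first exact: L_notC2w_form.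
  case: Lp => p1 p2 p3 [a [b pab]]; case: Lq => q1 q2 q3 [a' [b' qab]].
  by rewrite /pairing_zero /ins pab qab /wedge /= p1 p2 p3 q1 q2 q3; ring.
- apply: standardI => X XAnn; apply: ins_wedge_L_notC2w_pr1; apply: XAnn;
    by apply: Ann_wedge => Y /L_notC2w_pr1[].
Qed.

Lemma L_notC2w_C3w : C3w 2 L_notC2w.
Proof.
have [_ iso _] := L_notC2w_std_iso; split=> // X; split.
- move/L_notC2w_pr1 => [X1 X2 X3] eta [_ _ _ [a [b etaab]]] f; simpl in etaab.
  by rewrite /ins etaab /wedge /= !mxE X1 X2 X3; ring.
- move=> XAL; apply: ins_wedge_L_notC2w_pr1; apply: XAL.
    by apply: (L_notC2w_0 (a := 1) (b := 0)) => f; ring.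
  by apply: (L_notC2w_0 (a := 0) (b := 1)) => f; ring.
Qed.

Lemma L_notC2w_notC2w : ~ C2w 2 L_notC2w.
Proof.
case=> _ C2; have [_ _ _ [a [b ab]]] : L_notC2w ('e_i0, @zero_form R 4).
  apply/C2 => eta [Y [_ _ _ [a [b etaab]]]] f; simpl in etaab.
  by rewrite /ins etaab /wedge /= !mxE /=; ring.
by have := ab (args2 'e_i2 'e_i3); rewrite /zero_form /wedge /args2 /= !mxE /=; lra.
Qed.

End NotC2w.

Section NotC3w.
Variable R : realType.
Let i0 : 'I_5 := @Ordinal 5 0 isT.
Let i1 : 'I_5 := @Ordinal 5 1 isT.
Let i2 : 'I_5 := @Ordinal 5 2 isT.
Let i3 : 'I_5 := @Ordinal 5 3 isT.
Let i4 : 'I_5 := @Ordinal 5 4 isT.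

Definition graph_notC3w (X : 'rV[R]_5) : kform R 5 := fun f =>
  X 0 i0 * wedge i1 i2 f + X 0 i1 * (wedge i3 i4 f - wedge i0 i2 f).

Definition L_notC3w : eset R 5 := fun p =>
  [/\ p.1 0 i2 = 0, p.1 0 i3 = 0, p.1 0 i4 = 0 & forall f, p.2 f = graph_notC3w p.1 f].

Lemma L_notC3w_form p : L_notC3w p -> is_form 2 p.2.
Proof.
case=> _ _ _ pX; apply: is_form_eq (fun f => esym (pX f)).
by apply: is_formD; apply: is_formZ; last apply: is_formB; apply: is_form_wedge.
Qed.

Lemma L_notC3w_std_iso : std_iso 2 L_notC3w.
Proof.
split.
- split; first exact: L_notC3w_form.
  + by split; rewrite /= ?mxE // => f; rewrite /zero_form /graph_notC3w !mxE; ring.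
  + move=> p q [p2 p3 p4 pX] [q2 q3 q4 qX].
    split; rewrite /= ?mxE ?p2 ?p3 ?p4 ?q2 ?q3 ?q4 ?addr0 //.
    by move=> f; rewrite pX qX /graph_notC3w !mxE; ring.
  + move=> c p [p2 p3 p4 pX].
    split; rewrite /= ?mxE ?p2 ?p3 ?p4 ?mulr0 //.
    by move=> f; rewrite pX /graph_notC3w !mxE; ring.
- move=> p Lp; split=> [|q Lq f]; first exact: L_notC3w_form.
  case: Lp => p2 p3 p4 pX; case: Lq => q2 q3 q4 qX.
  by rewrite /pairing_zero /ins pX qX /graph_notC3w /wedge /= p2 p3 p4 q2 q3 q4; ring.
- apply: standardI => X XAnn.
  have [X2 X3] : X 0 i2 = 0 /\ X 0 i3 = 0.
    by apply: ins_wedge_eq0 => //; apply: XAnn; apply: Ann_wedge => Y [a []].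
  have [_ X4] : X 0 i3 = 0 /\ X 0 i4 = 0.
    by apply: ins_wedge_eq0 => //; apply: XAnn; apply: Ann_wedge => Y [a []].
  by exists (graph_notC3w X).
Qed.

Lemma L_notC3w_C2w : C2w 2 L_notC3w.
Proof.
have [_ iso _] := L_notC3w_std_iso; split=> // X; split.
- case=> /= X2 X3 X4 X0.
  have := X0 (args2 'e_i1 'e_i2); have := X0 (args2 'e_i3 'e_i4).
  rewrite /zero_form /graph_notC3w /wedge /args2 /= !mxE /= => e34 e12.
  have [Xi0 Xi1] : X 0 i0 = 0 /\ X 0 i1 = 0 by split; lra.
  move=> eta [Y [_ _ _ etaY]] f; simpl in etaY.
  by rewrite /ins etaY /graph_notC3w /wedge /= Xi0 Xi1 X2 X3 X4; ring.
- move=> Xcirc.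
  have E0 : pr2L L_notC3w (wedge i1 i2).
    by exists 'e_i0; split; rewrite /= ?mxE // => f; rewrite /graph_notC3w !mxE /=; ring.
  have E1 : pr2L L_notC3w (fun f => wedge i3 i4 f - wedge i0 i2 f).
    by exists 'e_i1; split; rewrite /= ?mxE // => f; rewrite /graph_notC3w !mxE /=; ring.
  have [X1 X2] := ins_wedge_eq0 (isT : i1 != i2) (Xcirc _ E0).
  have := Xcirc _ E1 (fun _ => 'e_i4); have := Xcirc _ E1 (fun _ => 'e_i3);
    have := Xcirc _ E1 (fun _ => 'e_i2).
  rewrite /ins /wedge /= !mxE /= => e2 e3 e4.
  have [X0 X3 X4] : [/\ X 0 i0 = 0, X 0 i3 = 0 & X 0 i4 = 0] by split; lra.
  by split=> //= f; rewrite /zero_form /graph_notC3w X0 X1; ring.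
Qed.

Lemma L_notC3w_notC3w : ~ C3w 2 L_notC3w.
Proof.
case=> _ C3; have [a [_ _ e4 _]] : pr1L L_notC3w 'e_i4.
  apply/C3 => eta [_ _ _ etaX] f; simpl in etaX.
  by rewrite /ins etaX /graph_notC3w /wedge /= !mxE /=; ring.
by move: e4; rewrite mxE /=; apply/eqP; rewrite oner_eq0.
Qed.

End NotC3w.

Section NotC2s.
Variable R : realType.
Let i0 : 'I_5 := @Ordinal 5 0 isT.
Let i1 : 'I_5 := @Ordinal 5 1 isT.
Let i2 : 'I_5 := @Ordinal 5 2 isT.
Let i3 : 'I_5 := @Ordinal 5 3 isT.
Let i4 : 'I_5 := @Ordinal 5 4 isT.

Definition graph_notC2s (X : 'rV[R]_5) : kform R 5 := fun f =>
  X 0 i0 * (wedge i1 i2 f + wedge i3 i4 f) - X 0 i1 * wedge i0 i2 f + X 0 i2 * wedge i0 i1 f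
  - X 0 i3 * wedge i0 i4 f + X 0 i4 * wedge i0 i3 f.

Definition L_notC2s : eset R 5 := fun p => forall f, p.2 f = graph_notC2s p.1 f.

Lemma L_notC2s_form p : L_notC2s p -> is_form 2 p.2.
Proof.
move=> pX; apply: is_form_eq (fun f => esym (pX f)).
by do ![apply: is_form_wedge | apply: is_formB | apply: is_formD | apply: is_formZ].
Qed.

Lemma L_notC2s_pr1 X : pr1L L_notC2s X.
Proof. by exists (graph_notC2s X). Qed.

Lemma L_notC2s_std_iso : std_iso 2 L_notC2s.
Proof.
split.
- split; first exact: L_notC2s_form.
  + by move=> f; rewrite /zero_form /graph_notC2s /= !mxE; ring.
  + by move=> p q pX qX f; rewrite /= pX qX /graph_notC2s !mxE; ring.
  + by move=> c p pX f; rewrite /= pX /graph_notC2s !mxE; ring.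
- move=> p pX; split=> [|q qX f]; first exact: L_notC2s_form.
  by rewrite /pairing_zero /ins pX qX /graph_notC2s /wedge /=; ring.
- by apply: standardI => X _; apply: L_notC2s_pr1.
Qed.

Lemma L_notC2s_C3s : C3s 2 L_notC2s.
Proof.
have [_ iso _] := L_notC2s_std_iso; split=> // a; split.
- case=> aF aE f /=; rewrite /graph_notC2s !mxE.
  have -> : a f = ins (f 0%N) a (fun j => f j.+1) by apply: (form_congr aF) => -[].
  by rewrite aE; [ring | apply: L_notC2s_pr1].
- move=> La; split=> [|Y _ f]; first exact: L_notC2s_form La.
  by rewrite /ins (La : forall f, a f = _) /graph_notC2s !mxE; ring.
Qed.

Lemma L_notC2s_notC2s : ~ C2s 2 L_notC2s.
Proof.
case=> _ C2; have [X X13] : pr2L L_notC2s (wedge i1 i3).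
  apply/C2; split=> [|Y Y0 f]; first exact: is_form_wedge.
  have := Y0 (args2 'e_i0 'e_i2); have := Y0 (args2 'e_i0 'e_i4).
  rewrite /zero_form /graph_notC2s /wedge /args2 /= !mxE /= => e04 e02.
  have [Y1 Y3] : Y 0 i1 = 0 /\ Y 0 i3 = 0 by split; lra.
  by rewrite /ins /wedge /= Y1 Y3; ring.
by have := X13 (args2 'e_i1 'e_i3); rewrite /graph_notC2s /wedge /args2 /= !mxE /=; lra.
Qed.

End NotC2s.

Local Close Scope ring_scope.

Theorem propositionA2 (R : realType) :
  (forall (n k : nat), (2 <= k)%N -> (k <= n - 1)%N ->
     forall L : eset R n, std_iso k L ->
       [/\ (C2s k L -> C1 k L), (C1 k L <-> C3s k L)
         & (C3s k L -> C2w k L /\ C3w k L)]) /\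
  [/\ (exists (n k : nat) (L : eset R n), [/\ (2 <= k)%N, (k <= n - 1)%N,
          std_iso k L, C3w k L & ~ C2w k L]),
      (exists (n k : nat) (L : eset R n), [/\ (2 <= k)%N, (k <= n - 1)%N,
          std_iso k L, C2w k L & ~ C3w k L]),
      (exists (n k : nat) (L : eset R n), [/\ (2 <= k)%N, (k <= n - 1)%N,
          std_iso k L, C2w k L /\ C3w k L & ~ C1 k L])
    & (exists (n k : nat) (L : eset R n), [/\ (2 <= k)%N, (k <= n - 1)%N,
          std_iso k L, C3s k L & ~ C2s k L])].
Proof.
split.
  move=> n k k2 _ L [subL _ Lstd]; have k_gt0 : (0 < k)%N by apply: leq_trans k2.
  have C3s_C1L := C3s_C1 subL k_gt0 Lstd.
  split; first exact: C2s_C1 subL k_gt0 Lstd.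
    by split; [exact: C1_C3s subL k_gt0 | exact: C3s_C1L].
  by move=> L3; split; [exact: C1_C2w (C3s_C1L L3) | exact: C3s_C3w Lstd L3].
split.
- exists 4, 2, (@L_notC2w R); split=> //.
  + exact: L_notC2w_std_iso.
  + exact: L_notC2w_C3w.
  + exact: L_notC2w_notC2w.
- exists 5, 2, (@L_notC3w R); split=> //.
  + exact: L_notC3w_std_iso.
  + exact: L_notC3w_C2w.
  + exact: L_notC3w_notC3w.
- exists 3, 2, (@L_notC1 R); split=> //.
  + exact: L_notC1_std_iso.
  + exact: L_notC1_C2w_C3w.
  + exact: L_notC1_notC1.
- exists 5, 2, (@L_notC2s R); split=> //.
  + exact: L_notC2s_std_iso.
  + exact: L_notC2s_C3s.
  + exact: L_notC2s_notC2s.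
Qed.
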